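(* Let $y_1,\dots,y_n$ be real-valued and $n$ times continuously differentiable on an open interval $I$, and let $x\in I$. With $W_n(x)=\det\big(y_j^{(i-1)}(x)\big)_{i,j=1}^n$ and $C_n^h(x)=\det\big(y_j(x+(i-1)h)\big)_{i,j=1}^n$: if $W_n(x)>0$ (resp. $W_n(x)<0$), then there is $h_0>0$ such that $C_n^h(x)>0$ (resp. $C_n^h(x)<0$) for all $0<h<h_0$. *)

From HB Require Import structures.
From mathcomp Require Import all_boot all_order all_algebra.
From mathcomp Require Import all_classical all_reals all_analysis.
Set Implicit Arguments. Unset Strict Implicit. Unset Printing Implicit Defensive.
Import Order.TTheory GRing.Theory Num.Theory.
Import numFieldNormedType.Exports.
Local Open Scope classical_set_scope.
Local Open Scope ring_scope.

Definition open_interval {R : realType} (I : set R) : Prop :=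
  open I /\ is_interval I.

Definition Cn_on {R : realType} (n : nat) (I : set R) (f : R -> R) : Prop :=
  (forall k, (k < n)%N -> forall x, I x -> derivable (derive1n k f) x 1) /\
  (forall x, I x -> {for x, continuous (derive1n n f)}).

(* Wronskian W_n(x) = det (y_j^{(i-1)}(x))_{i,j}  (0-indexed here). *)
Definition wronskian {R : realType} (n : nat) (y : 'I_n -> R -> R) (x : R) : R :=
  \det (\matrix_(i < n, j < n) derive1n i (y j) x).

(* Casoratian C_n^h(x) = det (y_j(x + (i-1) h))_{i,j}  (0-indexed here). *)
Definition casoratian {R : realType} (n : nat) (y : 'I_n -> R -> R) (h x : R) : R :=
  \det (\matrix_(i < n, j < n) y j (x + (i%:R) * h)).

(* Subtracting rows of the Casoratian matrix replaces row i by the forward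
   difference Δ_h^i y_j(x); the row operations form a unitriangular matrix, so
   the determinant is unchanged.  By the mean value theorem
   Δ_h^i y_j(x) = h^i y_j^(i)(ξ) with ξ ∈ [x, x + i h], hence after dividing
   row i by h^i the matrix tends to the Wronskian matrix as h -> 0+.  The
   determinant is continuous, so C_n^h(x) = h^(0 + 1 + ... + (n-1)) times a
   quantity tending to W_n(x), and has the sign of W_n(x) for small h > 0. *)
From HB Require Import structures.
From mathcomp Require Import all_boot all_order all_algebra.
From mathcomp Require Import all_classical all_reals all_analysis.
From mathcomp Require Import lra ring.
Set Implicit Arguments. Unset Strict Implicit. Unset Printing Implicit Defensive.
Import Order.TTheory GRing.Theory Num.Theory.
Import numFieldNormedType.Exports.
Local Open Scope classical_set_scope.
Local Open Scope ring_scope.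

Section ForwardDifference.
Variable R : comNzRingType.
Implicit Types (h s : R) (g : R -> R).

Fixpoint fdiff h i g : R -> R :=
  if i is i'.+1 then fun t => fdiff h i' g (t + h) - fdiff h i' g t else g.

Definition fdiff_coef (i k : nat) : R := (-1) ^+ (i - k) *+ 'C(i, k).

Lemma addr_natSmul s h j : s + j.+1%:R * h = s + h + j%:R * h.
Proof. by rewrite -natr1 mulrDl mul1r [_ * h + h]addrC addrA. Qed.

Lemma fdiff_coefSS i k : fdiff_coef i.+1 k.+1 = fdiff_coef i k - fdiff_coef i k.+1.
Proof.
rewrite /fdiff_coef subSS binS mulrnDr addrC.
have [ki | ik] := ltnP k i; last by rewrite (@bin_small i k.+1) ?mulr0n ?addr0 ?subr0.
by rewrite -(subnSK ki) exprS mulN1r !mulNrn.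
Qed.

Lemma fdiff_sum h g i m s : (i < m)%N ->
  fdiff h i g s = \sum_(k < m) fdiff_coef i k * g (s + k%:R * h).
Proof.
elim: i m s => [|i IH] [|m] s // im.
  rewrite big_ord_recl big1 => [|k _]; last by rewrite /fdiff_coef bin0n mulr0n mul0r.
  by rewrite /fdiff_coef mul0r addr0 mul1r addr0.
rewrite /= (IH m (s + h) im) (IH m.+1 s (ltnW im)) !big_ord_recl /=.
have coef0 : fdiff_coef i.+1 0 = - fdiff_coef i 0.
  by rewrite /fdiff_coef !subn0 !bin0 exprS mulN1r.
under [X in _ - (_ + X)]eq_bigr => k _ do rewrite [bump 0 k]add1n addr_natSmul.
under [X in _ = _ + X]eq_bigr => k _ do
  rewrite [bump 0 k]add1n addr_natSmul fdiff_coefSS mulrBl.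
rewrite sumrB coef0 mul0r addr0; ring.
Qed.

End ForwardDifference.

Section DerivativeOfDifference.
Variable R : realType.
Implicit Types (h s : R) (g : R -> R).

Lemma is_derive_fdiff h i g s :
  (forall j, (j <= i)%N -> derivable g (s + j%:R * h) 1) ->
  is_derive s 1 (fdiff h i g) (fdiff h i (derive1 g) s).
Proof.
elim: i s => [|i IH] s dg /=.
  have := dg 0%N (leqnn 0); rewrite mul0r addr0 derive1E; exact: derivableP.
apply: is_deriveB; last by apply: IH => j ji; apply/dg/leqW.
have dgh : is_derive (s + h) 1 (fdiff h i g) (fdiff h i (derive1 g) (s + h)).
  by apply: IH => j ji; rewrite -addr_natSmul; exact: dg.
by have := is_derive1_comp (g := shift h) dgh (is_derive_shift s 1 h); rewrite mulr1.
Qed.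

Lemma fdiff_mvt h i g s : 0 < h ->
  (forall k, (k < i)%N -> forall t, s <= t <= s + i%:R * h -> derivable (derive1n k g) t 1) ->
  exists2 xi, s <= xi <= s + i%:R * h & fdiff h i g s = h ^+ i * derive1n i g xi.
Proof.
move=> hp; elim: i g s => [|i IH] g s dg.
  by exists s; rewrite ?mul0r ?addr0 ?lexx ?expr0 ?mul1r.
have jh_ge0 j : 0 <= j%:R * h by rewrite mulr_ge0 // ltW.
have jh_le j : (j <= i)%N -> j%:R * h <= i%:R * h by move=> ji; rewrite ler_pM2r ?ler_nat.
have dfd t : s <= t <= s + h ->
    is_derive t 1 (fdiff h i g) (fdiff h i (derive1 g) t).
  move=> /andP[st ts]; apply: is_derive_fdiff => j ji; apply: (dg 0%N) => //.
  have := jh_ge0 j; have := jh_le j ji; rewrite addr_natSmul; lra.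
have [c /[!in_itv]/= /andP[sc cs] mvt] : exists2 c, c \in `]s, s + h[ &
    fdiff h i g (s + h) - fdiff h i g s = fdiff h i (derive1 g) c * (s + h - s).
  apply: MVT; first lra.
    by move=> t /[!in_itv]/= /andP[st ts]; apply: dfd; rewrite !ltW.
  apply: derivable_within_continuous => t /[!in_itv]/= stb.
  by have [] := dfd t stb.
have [xi /andP[cxi xic] taylor] : exists2 xi, c <= xi <= c + i%:R * h &
    fdiff h i (derive1 g) c = h ^+ i * derive1n i (derive1 g) xi.
  apply: IH => k ki t /andP[ct tc]; rewrite -derive1Sn; apply: dg => //.
  have := jh_ge0 i; rewrite addr_natSmul; lra.
exists xi; first by have := jh_ge0 i; rewrite addr_natSmul; lra.
by rewrite /= mvt taylor -derive1Sn -derive1nS exprS; ring.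
Qed.

Lemma fdiff_quotient_cvg g i s :
  (\forall t \near s, forall k, (k < i)%N -> derivable (derive1n k g) t 1) ->
  {for s, continuous (derive1n i g)} ->
  (fun h => fdiff h i g s / h ^+ i) @ 0^'+ --> derive1n i g s.
Proof.
move=> /nbhs_ballP[d0 /= d0p dg] /cvgrPdist_lt cg; apply/cvgrPdist_lt => e e0.
have /nbhs_ballP[d /= dp cgd] := cg e e0.
have m_gt0 : 0 < Num.min d d0 / i.+1%:R by rewrite divr_gt0 // lt_min dp d0p.
near=> h.
have hp : 0 < h by near: h; exact: nbhs_right_gt.
have ih_lt : i%:R * h < Num.min d d0.
  have : h < Num.min d d0 / i.+1%:R by near: h; exact: nbhs_right_lt.
  rewrite ltr_pdivlMr // mulrC -natr1 mulrDl mul1r; lra.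
have ih_ge0 : 0 <= i%:R * h by rewrite mulr_ge0 // ltW.
have near_s t : s <= t <= s + i%:R * h -> `|s - t| < Num.min d d0.
  by move=> /andP[st ts]; rewrite distrC ger0_norm ?subr_ge0 // ltrBlDl; lra.
have [k ki t /near_s|xi /near_s + ->] := fdiff_mvt (i := i) (g := g) (s := s) hp.
  by rewrite lt_min => /andP[_ ?]; apply: dg.
rewrite mulrC mulKf ?expf_neq0 ?gt_eqF // lt_min => /andP[? _]; exact: cgd.
Unshelve. all: by end_near.
Qed.

End DerivativeOfDifference.

Lemma cvg_det (R : numFieldType) (T : Type) (F : set_system T) {FF : Filter F}
    n (A : T -> 'M[R]_n) (B : 'M[R]_n) :
  (forall i j, (fun t => A t i j) @ F --> B i j) ->
  (fun t => \det (A t)) @ F --> \det B.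
Proof.
move=> cvgA; apply: cvg_big => [|s _]; first exact: add_continuous.
apply: cvgM; first exact: cvg_cst.
by apply: cvg_big => [|i _]; [exact: mul_continuous | exact: cvgA].
Qed.

Section Casoratian.
Variables (R : realType) (n : nat) (y : 'I_n -> R -> R).

Lemma casoratian_fdiff h x :
  casoratian y h x = \det (\matrix_(i < n, j < n) fdiff h i (y j) x).
Proof.
set L := \matrix_(i < n, k < n) fdiff_coef R i k.
have -> : \matrix_(i < n, j < n) fdiff h i (y j) x =
          L *m \matrix_(i < n, j < n) y j (x + i%:R * h).
  apply/matrixP => i j; rewrite !mxE (fdiff_sum _ _ _ (ltn_ord i)).
  by apply: eq_bigr => k _; rewrite !mxE.
rewrite det_mulmx; suff -> : \det L = 1 by rewrite mul1r.
rewrite det_trig; last by apply/is_trig_mxP => i k ik; rewrite mxE /fdiff_coef bin_small.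
by apply: big1 => i _; rewrite mxE /fdiff_coef subnn binn.
Qed.

Lemma casoratian_fdiff_quotient h x : h != 0 ->
  casoratian y h x = (\prod_(i < n) h ^+ i) *
    \det (\matrix_(i < n, j < n) (fdiff h i (y j) x / h ^+ i)).
Proof.
move=> h0; have -> : \prod_(i < n) h ^+ i = \det (diag_mx (\row_(i < n) h ^+ i)).
  by rewrite det_diag; apply: eq_bigr => i _; rewrite mxE.
rewrite casoratian_fdiff -det_mulmx mul_diag_mx.
by congr (\det _); apply/matrixP => i j; rewrite !mxE mulrC divfK ?expf_neq0.
Qed.

End Casoratian.

Lemma near_right0_ex (R : numFieldType) (P : R -> Prop) :
  (\forall h \near 0^'+, P h) -> exists2 h0 : R, 0 < h0 & forall h, 0 < h -> h < h0 -> P h.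
Proof.
rewrite near_withinE => /nbhs_ballP[e /= e0 Pe]; exists e => // h h0 he.
by apply: Pe => //; rewrite /ball /= sub0r normrN gtr0_norm.
Qed.

Theorem mainTheorem8 (R : realType) (n : nat) (I : set R) (y : 'I_n -> R -> R) (x : R) :
  open_interval I -> (forall j, Cn_on n I (y j)) -> I x ->
  (0 < wronskian y x ->
     exists h0 : R, 0 < h0 /\ forall h : R, 0 < h -> h < h0 -> 0 < casoratian y h x) /\
  (wronskian y x < 0 ->
     exists h0 : R, 0 < h0 /\ forall h : R, 0 < h -> h < h0 -> casoratian y h x < 0).
Proof.
move=> [oI _] Cy Ix.
pose G h := \matrix_(i < n, j < n) (fdiff h i (y j) x / h ^+ i).
have cvgG : (fun h => \det (G h)) @ 0^'+ --> wronskian y x.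
  apply: cvg_det => i j; rewrite mxE.
  under eq_fun => h do rewrite mxE.
  apply: fdiff_quotient_cvg.
    have : \forall t \near x, I t by apply: open_nbhs_nbhs.
    apply: filterS => t It k ki; apply: (Cy j).1 => //; exact: ltn_trans ki (ltn_ord i).
  by apply/differentiable_continuous/derivable1_diffP; apply: (Cy j).1.
have scale_gt0 (h : R) : 0 < h -> 0 < \prod_(i < n) h ^+ i.
  by move=> h0; apply: prodr_gt0 => i _; exact: exprn_gt0.
split => [W_gt0 | W_lt0].
  have [h0 h0p detG] := near_right0_ex (cvgr_gt _ cvgG _ W_gt0).
  exists h0; split => // h hp hh0.
  by rewrite casoratian_fdiff_quotient ?gt_eqF // mulr_gt0 ?scale_gt0 ?detG.
have [h0 h0p detG] := near_right0_ex (cvgr_lt _ cvgG _ W_lt0).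
exists h0; split => // h hp hh0.
by rewrite casoratian_fdiff_quotient ?gt_eqF // pmulr_rlt0 ?scale_gt0 ?detG.
Qed.
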